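(* Let $G=(X,\Sigma,\longrightarrow,X_0)$ and $R=(Z,\Sigma,\longrightarrow,Z_0)$ be deterministic automata. If $\Phi$ is a $\Sigma_{ucr}$-simulation from $G$ to $R$, then $\Phi$ is uniform w.r.t. $\Sigma_r$.
   Context: An automaton is a 4-tuple $A=(Q,\Sigma,\longrightarrow,Q_0)$ with state set $Q$, finite event set $\Sigma$, ${\longrightarrow}\subseteq Q\times\Sigma\times Q$ and $\emptyset\neq Q_0\subseteq Q$; write $q\xrightarrow{\sigma}q'$ for $(q,\sigma,q')\in{\longrightarrow}$, $q\xrightarrow{\sigma}$ if some such $q'$ exists, extended to strings. It is deterministic if $|Q_0|=1$ and each state has at most one $\sigma$-successor for each $\sigma$. A state $q$ is $s$-reachable ($s\in\Sigma^*$) if $q_0\xrightarrow{s}q$ for some initial $q_0$. Events are partitioned into uncontrollable $\Sigma_{uc}$ and controllable $\Sigma_c$; $\Sigma_r\subseteq\Sigma$ is a fixed set of required events. $\Phi\subseteq X\times Z$ is a $\Sigma_{ucr}$-simulation from $G$ to $R$ if (initial state) every $x_0\in X_0$ has $z_0\in Z_0$ with $(x_0,z_0)\in\Phi$; ($\Sigma_{uc}$-forward) for $(x,z)\in\Phi$, $\sigma\in\Sigma_{uc}$, $x\xrightarrow{\sigma}x'$ there is $z'$ with $z\xrightarrow{\sigma}z'$, $(x',z')\in\Phi$; ($\Sigma_r$-backward) for $(x,z)\in\Phi$, $\sigma\in\Sigma_r$, $z\xrightarrow{\sigma}z'$ there is $x'$ with $x\xrightarrow{\sigma}x'$, $(x',z')\in\Phi$.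 Such $\Phi$ is uniform w.r.t. $\Sigma_r$ if for any $(x_1,z_1),(x_2,z_2)\in\Phi$ such that, for some $s\in\Sigma^*$, $x_1,x_2$ are $s$-reachable in $G$ and $z_1,z_2$ are $s$-reachable in $R$: for all $\sigma\in\Sigma_r$ and $x_2'$, if $z_1\xrightarrow{\sigma}$ and $x_2\xrightarrow{\sigma}x_2'$ then there is $z_2'$ with $z_2\xrightarrow{\sigma}z_2'$ and $(x_2',z_2')\in\Phi$. *)

From Stdlib Require Import List.
Import ListNotations.
Set Implicit Arguments.

Record automaton (E : Type) := Automaton {
  state : Type;
  trans : state -> E -> state -> Prop;
  init  : state -> Prop;
  init_nonempty : exists q, init q
}.
Arguments state {E} _.
Arguments trans {E} _ _ _ _.
Arguments init {E} _ _.

Inductive trans_str {E} (A : automaton E) : state A -> list E -> state A -> Prop :=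
| ts_nil : forall q, trans_str A q [] q
| ts_cons : forall q q' q'' e s,
    trans A q e q' -> trans_str A q' s q'' -> trans_str A q (e :: s) q''.

Definition deterministic {E} (A : automaton E) : Prop :=
  (forall q1 q2, init A q1 -> init A q2 -> q1 = q2) /\
  (forall q e q1 q2, trans A q e q1 -> trans A q e q2 -> q1 = q2).

Definition reachable_by {E} (A : automaton E) (s : list E) (q : state A) : Prop :=
  exists q0, init A q0 /\ trans_str A q0 s q.

(* Sigma_uc and Sigma_r are given as predicates on E; Sigma_c is the complement of Sigma_uc. *)
Definition ucr_simulation {E} (Suc Sr : E -> Prop) (G R : automaton E)
    (Phi : state G -> state R -> Prop) : Prop :=
  (forall x0, init G x0 -> exists z0, init R z0 /\ Phi x0 z0) /\
  (forall x z e x', Phi x z -> Suc e -> trans G x e x' ->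
      exists z', trans R z e z' /\ Phi x' z') /\
  (forall x z e z', Phi x z -> Sr e -> trans R z e z' ->
      exists x', trans G x e x' /\ Phi x' z').

Definition uniform {E} (Sr : E -> Prop) (G R : automaton E)
    (Phi : state G -> state R -> Prop) : Prop :=
  forall x1 z1 x2 z2 (s : list E),
    Phi x1 z1 -> Phi x2 z2 ->
    reachable_by G s x1 -> reachable_by G s x2 ->
    reachable_by R s z1 -> reachable_by R s z2 ->
    forall e x2', Sr e -> (exists z1', trans R z1 e z1') -> trans G x2 e x2' ->
      exists z2', trans R z2 e z2' /\ Phi x2' z2'.


(* In a deterministic automaton a string reaches at most one state, so z1 = z2
   and the required event is enabled at z2.  The Sigma_r-backward condition then
   yields a G-successor related to the R-successor, and determinism of G makes
   it the given one. *)

Lemma trans_str_functional {E} {A : automaton E} :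
  (forall q e q1 q2, trans A q e q1 -> trans A q e q2 -> q1 = q2) ->
  forall {q s q1 q2}, trans_str A q s q1 -> trans_str A q s q2 -> q1 = q2.
Proof.
  intros Hfun q s q1 q2 H1; revert q2.
  induction H1 as [q | q q' q'' e s Hstep _ IH]; intros q2 H2; inversion H2; subst.
  - reflexivity.
  - apply IH. rewrite (Hfun _ _ _ _ Hstep ltac:(eassumption)). assumption.
Qed.

Lemma reachable_by_unique {E} {A : automaton E} {s : list E} {q1 q2 : state A} :
  deterministic A -> reachable_by A s q1 -> reachable_by A s q2 -> q1 = q2.
Proof.
  intros [Hinit Htrans] [p1 [Hp1 Hs1]] [p2 [Hp2 Hs2]].
  rewrite (Hinit _ _ Hp1 Hp2) in Hs1.
  exact (trans_str_functional Htrans Hs1 Hs2).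
Qed.

Lemma ucr_simulation_backward_deterministic {E} {Suc Sr : E -> Prop}
    {G R : automaton E} {Phi : state G -> state R -> Prop} {x z e x' z'} :
  deterministic G -> ucr_simulation Suc Sr G R Phi ->
  Phi x z -> Sr e -> trans R z e z' -> trans G x e x' -> Phi x' z'.
Proof.
  intros [_ Htrans] [_ [_ Hback]] Hxz He Hz Hx.
  destruct (Hback _ _ _ _ Hxz He Hz) as [x'' [Hx'' Hx''z']].
  rewrite (Htrans _ _ _ _ Hx Hx''). assumption.
Qed.

Theorem lemma6 (E : Type) (Suc Sr : E -> Prop) (G R : automaton E)
    (Phi : state G -> state R -> Prop) :
  deterministic G -> deterministic R ->
  ucr_simulation Suc Sr G R Phi ->
  uniform Sr G R Phi.
Proof.
  intros HG HR Hsim x1 z1 x2 z2 s _ Hx2z2 _ _ Hz1 Hz2 e x2' He [z1' Hz1'] Hx2'.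
  rewrite (reachable_by_unique HR Hz1 Hz2) in Hz1'.
  exists z1'. split; [assumption |].
  exact (ucr_simulation_backward_deterministic HG Hsim Hx2z2 He Hz1' Hx2').
Qed.
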